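(* Let $X$ be a topological space (no separation axioms assumed) that is both locally $\mathfrak{c}$ and $\mathfrak{c}$-fair, and let $\kappa\le\mathfrak{c}$ be a regular cardinal such that for every strongly increasing $\kappa$-sequence $\{F_\alpha:\alpha<\kappa\}$ of closed subsets of $X$ the union $\bigcup_{\alpha<\kappa}F_\alpha$ is closed in $X$. If $|X|>\mathfrak{c}$, then for every subset $A\subseteq X$ with $|A|\le\mathfrak{c}$ there exists a clopen subset $U$ of $X$ with $A\subseteq U$, $|U|=\mathfrak{c}$ and $L(U)\ge\kappa$.
   Context: A space $X$ is locally $\mathfrak{c}$ if every point has a neighbourhood of cardinality $\le\mathfrak{c}$. $X$ is $\mathfrak{c}$-fair if the closure of every subset of $X$ of cardinality $\mathfrak{c}$ also has cardinality $\mathfrak{c}$. A $\kappa$-sequence $\{F_\alpha:\alpha<\kappa\}$ of subsets of $X$ is strongly increasing if $F_\alpha\subseteq \operatorname{int}F_{\alpha+1}$ for all $\alpha<\kappa$. $L(U)$ denotes the Lindelöf number of $U$ (the least infinite cardinal $\lambda$ such that every open cover of $U$ has a subcover of size $\le\lambda$). *)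

From HB Require Import structures.
From mathcomp Require Import all_boot all_order all_algebra.
From mathcomp Require Import all_classical all_reals topology.
Set Implicit Arguments. Unset Strict Implicit. Unset Printing Implicit Defensive.
Local Open Scope classical_set_scope.
Local Open Scope card_scope.

(* The continuum c is represented by the cardinality of the power set of nat. *)
Definition continuum : set (set nat) := [set: set nat].

Definition card_lt (T U : Type) (A : set T) (B : set U) : Prop :=
  (A #<= B) /\ ~ (B #<= A).

Definition locally_c (X : topologicalType) : Prop :=
  forall x : X, exists N : set X, nbhs x N /\ (N #<= continuum).

Definition c_fair (X : topologicalType) : Prop :=
  forall A : set X, (A #= continuum) -> (closure A #= continuum).

(* A regular (infinite) cardinal kappa, presented as a well-ordered type (K, lt)
   of order type kappa (an initial ordinal). *)
Definition regular_cardinal (K : Type) (lt : K -> K -> Prop) : Prop :=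
  (forall a, ~ lt a a) /\
  (forall a b c, lt a b -> lt b c -> lt a c) /\
  (forall a b, a = b \/ lt a b \/ lt b a) /\
  well_founded lt /\
  (* initial ordinal: every proper initial segment has smaller cardinality *)
  (forall a, card_lt [set b | lt b a] [set: K]) /\
  infinite_set [set: K] /\
  (* regular: every cofinal (unbounded) subset has full cardinality *)
  (forall S : set K, (forall a, exists2 b, S b & ~ lt b a) -> (S #= [set: K])).

Definition is_succ (K : Type) (lt : K -> K -> Prop) (a b : K) : Prop :=
  lt a b /\ (forall c, lt a c -> ~ lt c b).

Definition strongly_increasing (X : topologicalType) (K : Type)
    (lt : K -> K -> Prop) (F : K -> set X) : Prop :=
  forall a b, is_succ lt a b -> F a `<=` interior (F b).

Definition lindelof_le (X : topologicalType) (U : set X) (I : Type) (S : set I) : Prop :=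
  forall C : set (set X), (forall V, C V -> open V) -> U `<=` \bigcup_(V in C) V ->
  exists2 D : set (set X), D `<=` C /\ U `<=` \bigcup_(V in D) V & D #<= S.

(* L(U) >= kappa: no infinite cardinal lambda < kappa (every such lambda is the
   cardinality of a subset of K) bounds the Lindelof number of U. *)
Definition lindelof_ge (X : topologicalType) (U : set X) (K : Type) : Prop :=
  forall S : set K, infinite_set S -> card_lt S [set: K] -> ~ lindelof_le U S.

(* Every set B of size at most c lies in the interior of a closed set E of size
   c with E not contained in B: close up the union of small neighbourhoods of the
   points of B, a copy of c and one point outside B, and apply c-fairness.
   Iterating, F_a := E (A ∪ ⋃_{b<a} F_b) is a strongly increasing kappa-sequence
   of closed sets of size c.  Its union U is open since kappa has no largest
   element and closed by hypothesis.  A subcover of {int F_a} of size < kappa is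
   bounded by some a by regularity, which would give U ⊆ F_a although
   F_(a+1) ⊄ F_a. *)

From HB Require Import structures.
From mathcomp Require Import all_boot all_order all_algebra.
From mathcomp Require Import all_classical all_reals topology.
Local Open Scope classical_set_scope.
Local Open Scope card_scope.

Definition npair (S T : set nat) : set nat :=
  [set n | if odd n then T n./2 else S n./2].

Lemma npair_inj S T S' T' : npair S T = npair S' T' -> S = S' /\ T = T'.
Proof.
move=> e; split; apply/funext => n; apply/propext.
- by have := congr1 (fun P => P n.*2) e; rewrite /npair /= odd_double doubleK => ->.
- have := congr1 (fun P => P n.*2.+1) e.
  by rewrite /npair /= odd_double /= uphalf_double => ->.
Qed.

Lemma bigcup_card_le_continuum I T (B : set I) (N : I -> set T) :
  B #<= continuum -> (forall i, B i -> N i #<= continuum) ->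
  \bigcup_(i in B) N i #<= continuum.
Proof.
rewrite /continuum => /pcard_injP[fB fB_inj] N_le.
have [->|/set0P[i0 _]] := eqVneq B set0; first by rewrite bigcup_set0 card_ge0.
have /choice[fN fN_inj] : forall i, exists f : T -> set nat,
    B i -> {in N i &, injective f}.
  move=> i; have [/N_le/pcard_injP[f f_inj]|nBi] := pselect (B i).
    by exists f.
  by exists (fun=> set0).
have /choice[idx idxP] : forall y, exists i,
    (\bigcup_(i in B) N i) y -> B i /\ N i y.
  move=> y; have [[i Bi Niy]|nUy] := pselect ((\bigcup_(i in B) N i) y).
    by exists i.
  by exists i0.
apply/pcard_injP; exists (fun y => npair (fB (idx y)) (fN (idx y) y)).
move=> x y /[!inE] Ux Uy /npair_inj[e1 e2].
have [Bx Nx] := idxP x Ux; have [By Ny] := idxP y Uy.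
have ei : idx x = idx y by apply: fB_inj; rewrite ?inE.
by rewrite ei in Nx e2 Bx; apply: (fN_inj _ Bx); rewrite ?inE.
Qed.

Lemma setU_card_le_continuum T (A1 A2 : set T) :
  A1 #<= continuum -> A2 #<= continuum -> A1 `|` A2 #<= continuum.
Proof.
move=> A1c A2c.
have -> : A1 `|` A2 = \bigcup_(b in [set: bool]) (if b then A1 else A2).
  by apply/seteqP; split=> [y [A1y|A2y]|y [[] _ ?]];
    [exists true | exists false | left | right].
apply: bigcup_card_le_continuum => [|[] //].
apply/pcard_injP; exists (fun b : bool => if b then [set: nat] else set0).
by move=> [] [] _ _ // /(congr1 (@^~ 0%N)) /=; rewrite propeqE => -[].
Qed.

Lemma set1_card_le_continuum T (x : T) : [set x] #<= continuum.
Proof. by rewrite (card_le_eql (eq_card1 x (set0 : set nat))) card_leT. Qed.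

Lemma closed_extension {X : topologicalType} :
  locally_c X -> c_fair X -> card_lt continuum [set: X] ->
  forall B : set X, B #<= continuum ->
  exists E : set X,
    [/\ closed E, B `<=` interior E, E #= continuum & ~ E `<=` B].
Proof.
move=> locc fair [cX Xc] B Bc.
have /choice[N NP] := locc.
have /card_subP[C Cc _] := cX.
have [p nBp] : exists p, ~ B p.
  apply: contrapT => Bfull; apply: Xc; apply: card_le_trans Bc.
  by apply: subset_card_le => x _; apply: contrapT => nBx; apply: Bfull; exists x.
exists (closure (\bigcup_(x in B) N x `|` C `|` [set p])); split.
- exact: closed_closure.
- move=> x Bx; apply: filterS (NP x).1 => y Ny.
  by apply: subset_closure; left; left; exists x.
- apply: fair; apply: Cantor_Bernstein.
    apply: setU_card_le_continuum; last exact: set1_card_le_continuum.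
    apply: setU_card_le_continuum; last by case/card_eqPle: Cc.
    by apply: bigcup_card_le_continuum => // x _; case: (NP x).
  case/card_eqPle: Cc => _ /card_le_trans; apply.
  by apply: subset_card_le => y Cy; left; right.
- by move=> /(_ p) EB; apply/nBp/EB/subset_closure; right.
Qed.

Section TransfiniteChain.
Context {X : topologicalType} {K : Type} {lt : K -> K -> Prop}.
Context (wf : well_founded lt) {Phi : set X -> set X} {A : set X}.

Definition chain : K -> set X := Fix wf (fun=> set X)
  (fun a rec => Phi (A `|` [set x | exists b (ltba : lt b a), rec b ltba x])).

Definition chain_below (a : K) : set X := \bigcup_(b in [set b | lt b a]) chain b.

Lemma chainE a : chain a = Phi (A `|` chain_below a).
Proof.
rewrite /chain Fix_eq; last first.
  move=> b f g fg; congr (Phi (A `|` _)); apply/seteqP.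
  by split=> x [c [ltcb fcx]]; exists c, ltcb; rewrite ?fg // -fg.
congr (Phi (A `|` _)); apply/seteqP.
by split=> x [c]; [move=> [ltca cx] | move=> ltca cx]; exists c => //; exists ltca.
Qed.

Hypothesis PhiP : forall B, B #<= continuum ->
  [/\ closed (Phi B), B `<=` interior (Phi B), Phi B #= continuum & ~ Phi B `<=` B].
Hypotheses (Kc : [set: K] #<= continuum) (Ac : A #<= continuum).

Lemma chain_below_card a : A `|` chain_below a #<= continuum.
Proof.
elim/(well_founded_ind wf): a => a IH.
apply: setU_card_le_continuum => //.
apply: bigcup_card_le_continuum => [|b ltba].
  exact: card_le_trans (card_leT _) Kc.
by rewrite chainE; case: (PhiP _ (IH b ltba)) => _ _ /card_eqPle[].
Qed.

Lemma chainP a : [/\ closed (chain a), A `|` chain_below a `<=` interior (chain a),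
  chain a #= continuum & ~ chain a `<=` A `|` chain_below a].
Proof. by rewrite chainE; apply/PhiP/chain_below_card. Qed.

Lemma sub_chain a : A `<=` chain a.
Proof.
by case: (chainP a) => _ sub _ _ x Ax; apply: interior_subset; apply: sub; left.
Qed.

Lemma chain_sub_interior {b a} : lt b a -> chain b `<=` interior (chain a).
Proof. by case: (chainP a) => _ sub _ _ ltba x bx; apply: sub; right; exists b. Qed.

Lemma chain_not_sub {b a} : lt b a -> ~ chain a `<=` chain b.
Proof.
case: (chainP a) => _ _ _ nsub ltba sub_ab; apply: nsub => x /sub_ab bx.
by right; exists b.
Qed.

End TransfiniteChain.

Arguments chain {X K lt} wf Phi A.

Section RegularCardinal.
Context {K : Type} {lt : K -> K -> Prop} (regK : regular_cardinal lt).

Lemma regular_no_max a : exists b, lt a b.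
Proof.
case: regK => _ [_ [_ [_ [_ [infK reg]]]]].
apply: contrapT => amax; apply: infK.
have /eq_finite_set <- : [set a] #= [set: K]; last exact: finite_set1.
by apply: reg => c; exists a => // ltac; apply: amax; exists c.
Qed.

Lemma regular_bounded {S T : set K} :
  card_lt S [set: K] -> T #<= S -> exists a, forall b, T b -> lt b a.
Proof.
case: regK => _ [_ [_ [_ [_ [_ reg]]]]] [_ nKS] TS.
apply: contrapT => unbounded; apply: nKS.
have /card_eqPle[_ KT] : T #= [set: K].
  apply: reg => a; apply: contrapT => nb; apply: unbounded; exists a => b Tb.
  by apply: contrapT => nltba; apply: nb; exists b.
exact: card_le_trans KT TS.
Qed.

End RegularCardinal.

Section StronglyIncreasingUnion.
Context {X : topologicalType} {K : Type} {lt : K -> K -> Prop} {F : K -> set X}.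
Hypothesis F_sub_interior : forall {b a}, lt b a -> F b `<=` interior (F a).

Lemma open_bigcup_sub_interior :
  (forall a, exists b, lt a b) -> open (\bigcup_(a in [set: K]) F a).
Proof.
move=> no_max; rewrite openE => x [a _ Fax]; have [b ltab] := no_max a.
have Fbx := F_sub_interior ltab _ Fax.
by apply: filterS Fbx => y Fby; exists b.
Qed.

Lemma lindelof_ge_bigcup : regular_cardinal lt ->
  (forall a, ~ \bigcup_(b in [set: K]) F b `<=` F a) ->
  lindelof_ge (\bigcup_(a in [set: K]) F a) K.
Proof.
move=> regK nsub S /infinite_setN0[k0 _] SK lindS.
pose C := range (interior \o F).
have [D [DC DU] DS] : exists2 D,
    D `<=` C /\ \bigcup_(a in [set: K]) F a `<=` \bigcup_(V in D) V & D #<= S.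
  apply: lindS => [_ [b _ <-]|x [a _ Fax]]; first exact: open_interior.
  have [b ltab] := regular_no_max regK a.
  by exists (interior (F b)); [exists b | exact: F_sub_interior ltab _ Fax].
have /choice[idx idxP] : forall V, exists b, C V -> interior (F b) = V.
  move=> V; have [[b _ <-]|nCV] := pselect (C V); first by exists b.
  by exists k0.
have [a idx_lt] := regular_bounded regK SK (card_le_trans (card_image_le idx D) DS).
apply: (nsub a) => x /DU[V DV Vx].
rewrite -(idxP V (DC V DV)) in Vx.
apply: interior_subset; apply: (F_sub_interior (idx_lt _ (imageP _ DV))).
exact: interior_subset.
Qed.

End StronglyIncreasingUnion.

Theorem theorem4p2 (X : topologicalType) (K : Type) (lt : K -> K -> Prop) :
  locally_c X -> c_fair X ->
  regular_cardinal lt ->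
  ([set: K] #<= continuum) ->
  (forall F : K -> set X, (forall a, closed (F a)) -> strongly_increasing lt F ->
     closed (\bigcup_(a in [set: K]) F a)) ->
  card_lt continuum [set: X] ->
  forall A : set X, (A #<= continuum) ->
  exists U : set X,
    [/\ open U, closed U, A `<=` U, (U #= continuum) & lindelof_ge U K].
Proof.
move=> locc fair regK Kc closed_union Xc A Ac.
have /choice[Phi PhiP] : forall B : set X, exists E : set X, B #<= continuum ->
    [/\ closed E, B `<=` interior E, E #= continuum & ~ E `<=` B].
  move=> B; have [Bc|nBc] := pselect (B #<= continuum).
    by have [E EP] := closed_extension locc fair Xc B Bc; exists E.
  by exists set0.
case: (regK) => _ [_ [_ [wf [_ [/infinite_setN0[k0 _] _]]]]].
pose F := chain wf Phi A.
have Fint b a : lt b a -> F b `<=` interior (F a) := chain_sub_interior wf PhiP Kc Ac.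
have Fcard a : F a #= continuum by case: (chainP wf PhiP Kc Ac a).
exists (\bigcup_(a in [set: K]) F a); split.
- exact: open_bigcup_sub_interior Fint (regular_no_max regK).
- apply: closed_union => [a|a b [ltab _]]; last exact: Fint.
  by case: (chainP wf PhiP Kc Ac a).
- by move=> x Ax; exists k0 => //; apply: sub_chain Ax.
- apply: Cantor_Bernstein.
    by apply: bigcup_card_le_continuum => // a _; case/card_eqPle: (Fcard a).
  have /card_eqPle[_ cF] := Fcard k0.
  by apply: card_le_trans cF _; apply: subset_card_le => x Fx; exists k0.
- apply: (lindelof_ge_bigcup Fint regK) => a Fa.
  have [b ltab] := regular_no_max regK a.
  by apply: (chain_not_sub wf PhiP Kc Ac ltab) => x Fbx; apply: Fa; exists b.
Qed.
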